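(* Let the map $w:V(\mathcal{H}\mathcal{L}_0)\mapsto\hat{\mathbb C}$ define a hexagonal circle pattern with $MR=-1$. Extend $w$ to the points of $V(\mathcal{T}\mathcal{L})\setminus V(\mathcal{H}\mathcal{L}_0)$ by the following rule. Fix some point $P_{\infty}\in\hat{\mathbb C}$. Let $\mathfrak{z}'$ be a center of an elementary hexagon of $\mathcal{H}\mathcal{L}_0$. Set $w(\mathfrak{z}')$ to be the reflection of the point $P_{\infty}$ in the circle $C(\mathfrak{z}')$. Then the condition $M(w_1,\dots,w_6)=-1$ holds also for $w_k=w(\mathfrak{z}_k)$ in the case when the points $\mathfrak{z}_1,\mathfrak{z}_2,\ldots,\mathfrak{z}_6$ are the vertices (listed counterclockwise) of any elementary hexagon of the two complementary hexagonal sublattices $\mathcal{H}\mathcal{L}_1$ and $\mathcal{H}\mathcal{L}_2$.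
   Context: Let $\omega=\exp(2\pi i/3)$, $\varepsilon=\exp(\pi i/3)$. The regular triangular lattice $\mathcal{T}\mathcal{L}$ has vertices $V(\mathcal{T}\mathcal{L})=\{k+\ell\omega+m\omega^2: k,\ell,m\in\mathbb Z\}$, edges joining vertices at distance 1. For $j=0,1,2$ the hexagonal sublattice $\mathcal{H}\mathcal{L}_j$ has vertices $k+\ell\omega+m\omega^2$ with $k+\ell+m\not\equiv j\pmod 3$, edges of length 1 between them, and 2-cells the regular hexagons with vertices $\mathfrak{z}'+\varepsilon^k$, $k=1,\dots,6$, centered at the points $\mathfrak{z}'$ with $k+\ell+m\equiv j\pmod 3$. The multi-ratio is $M(w_1,\dots,w_6)=\frac{(w_1-w_2)(w_3-w_4)(w_5-w_6)}{(w_2-w_3)(w_4-w_5)(w_6-w_1)}$. A map $w:V(\mathcal{H}\mathcal{L}_0)\to\hat{\mathbb C}$ defines a hexagonal circle pattern with $MR=-1$ if for every elementary hexagon of $\mathcal{H}\mathcal{L}_0$ with center $\mathfrak{z}'$ the points $w(\mathfrak{z}'+\varepsilon^k)$, $k=1,\dots,6$, lie in this circular order on a circle $C(\mathfrak{z}')$, and their multi-ratio (vertices listed counterclockwise) equals $-1$. *)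

From mathcomp Require Import all_boot all_algebra complex.
From mathcomp Require Import reals.
Set Implicit Arguments. Unset Strict Implicit. Unset Printing Implicit Defensive.
Import GRing.Theory Num.Theory.
Local Open Scope ring_scope.

(* A vertex k + l w + m w^2 of TL (w = exp(2 pi i/3)) is encoded by the pair
   (a, b) = (k - m, l - m) : it is the point a + b w  (since 1 + w + w^2 = 0).
   Its class k + l + m mod 3 equals (a + b) mod 3. *)
Definition pt := (int * int)%type.
Definition padd (z u : pt) : pt := (z.1 + u.1, z.2 + u.2).
Definition cls (z : pt) : int := ((z.1 + z.2) %% 3)%Z.

(* eps = exp(i pi/3) = 1 + w.  Offsets eps^k, k = 1..6, in (a,b)-coordinates:
   eps = 1 + w, eps^2 = w, eps^3 = -1, eps^4 = -1 - w, eps^5 = -w, eps^6 = 1.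
   (Listed counterclockwise.) *)
Definition eps_off (k : nat) : pt :=
  match k with
  | 1 => (1, 1)%Z
  | 2 => (0, 1)%Z
  | 3 => (-1, 0)%Z
  | 4 => (-1, -1)%Z
  | 5 => (0, -1)%Z
  | _ => (1, 0)%Z
  end.

Definition hexv (z : pt) (k : nat) : pt := padd z (eps_off k).

Section Sphere.
Variable R : realType.
Local Notation C := (R[i]).

(* None is the point at infinity. *)
Definition Chat := option C.

(* Homogeneous "difference": with homogeneous coordinates z ~ (z:1),
   oo ~ (1:0), this is the determinant x1*y2 - x2*y1.  For finite points it
   is z1 - z2; factors involving oo are the usual limits. *)
Definition hdet (u v : Chat) : C :=
  match u, v with
  | Some a, Some b => a - b
  | None, Some _ => 1
  | Some _, None => -1
  | None, None => 0
  end.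

(* Multi-ratio condition  M(w1,...,w6) = -1, written in cross-multiplied
   (homogeneous) form:
     (w1-w2)(w3-w4)(w5-w6) = - (w2-w3)(w4-w5)(w6-w1). *)
Definition MR_minus1 (p : nat -> Chat) : Prop :=
  hdet (p 1%N) (p 2%N) * hdet (p 3%N) (p 4%N) * hdet (p 5%N) (p 6%N)
  + hdet (p 2%N) (p 3%N) * hdet (p 4%N) (p 5%N) * hdet (p 6%N) (p 1%N) = 0.

(* GCircle c r : the circle |z - c| = r ;  GLine p d : the line p + t d
   (t real) together with oo. *)
Inductive gcircle :=
  | GCircle of C & R
  | GLine of C & C.

Definition gcircle_wf (K : gcircle) : Prop :=
  match K with
  | GCircle _ r => 0 < r
  | GLine _ d => d != 0
  end.

Definition on_gcircle (K : gcircle) (u : Chat) : Prop :=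
  match K, u with
  | GCircle c r, Some z => `|z - c| = real_complex R r
  | GCircle _ _, None => False
  | GLine p d, Some z => (z - p) / d \is Num.real
  | GLine _ _, None => True
  end.

Definition reflect_gc (K : gcircle) (u : Chat) : Chat :=
  match K, u with
  | GCircle c r, Some z =>
      if z == c then None else Some (c + real_complex R (r ^+ 2) / (z - c)^*)
  | GCircle c _, None => Some c
  | GLine p d, Some z => Some (p + d / d^* * (z - p)^*)
  | GLine _ _, None => None
  end.

(* Six points p 1, ..., p 6 lie in this circular order on a circle:
   for all 1 <= i < j < k < l <= 6 the pair (p i, p k) separates (p j, p l),
   i.e. the cross-ratio (p_i-p_j)(p_k-p_l)/((p_j-p_k)(p_l-p_i)) is a negative
   real number.  (For a complex number x, "x < 0" means x is real and
   negative; we multiply by the conjugate of the denominator.) *)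
Definition circ_order6 (p : nat -> Chat) : Prop :=
  forall i j k l : nat, (1 <= i)%N -> (i < j)%N -> (j < k)%N -> (k < l)%N ->
    (l <= 6)%N ->
    hdet (p i) (p j) * hdet (p k) (p l) * (hdet (p j) (p k) * hdet (p l) (p i))^* < 0.

(* w : V(HL_0) -> Chat (values at points of class 0 are irrelevant) defines
   a hexagonal circle pattern with MR = -1, with circles C z'. *)
Definition hex_circle_pattern_MR (w : pt -> Chat) (Cc : pt -> gcircle) : Prop :=
  forall z : pt, cls z = 0%Z ->
    [/\ gcircle_wf (Cc z),
        (forall k : nat, (1 <= k <= 6)%N -> on_gcircle (Cc z) (w (hexv z k))),
        (forall k l : nat, (1 <= k)%N -> (k < l)%N -> (l <= 6)%N ->
            w (hexv z k) <> w (hexv z l)),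
        circ_order6 (fun k => w (hexv z k))
      & MR_minus1 (fun k => w (hexv z k))].

Definition extend_w (w : pt -> Chat) (Cc : pt -> gcircle) (Pinf : Chat)
  (z : pt) : Chat :=
  if cls z == 0%Z then reflect_gc (Cc z) Pinf else w z.

End Sphere.

(* In homogeneous coordinates the inversion in a generalized circle K is the
   antilinear map v |-> M_K conj(v), and the points of K are its eigenvectors.
   Comparing determinants, if q is the reflection of P in K and a is a fixed
   point of K, then for every x on K
       hdet q x * conj (hdet x a) = kappa_K * conj (hdet P x) * hdet x a
   with kappa_K independent of x.  Around a vertex z of HL_1 or HL_2 every
   other neighbour is a centre of HL_0, whose circle passes through a = w(z)
   and the two adjacent neighbours.  Writing the identity for the three circles
   and both neighbours of each, the kappas and conjugated factors cancel in the
   multi-ratio; only the incidences of the pattern are used. *)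

From mathcomp Require Import all_boot all_algebra complex.
From mathcomp Require Import reals.
From mathcomp Require Import ring zify.
Set Implicit Arguments. Unset Strict Implicit. Unset Printing Implicit Defensive.
Import GRing.Theory Num.Theory.
Local Open Scope ring_scope.

Section HomogeneousCoordinates.
Variable R : realType.
Local Notation C := (R[i]).

Definition hom (u : Chat R) : C * C :=
  match u with Some a => (a, 1) | None => (1, 0) end.

Definition det2 (u v : C * C) : C := u.1 * v.2 - u.2 * v.1.

Definition conj2 (v : C * C) : C * C := (v.1^*, v.2^*).

Lemma hdetE (u v : Chat R) : hdet u v = det2 (hom u) (hom v).
Proof. by case: u => [a|]; case: v => [b|]; rewrite /det2 /=; ring. Qed.

Lemma hdetC (u v : Chat R) : hdet u v = - hdet v u.
Proof. by rewrite !hdetE /det2; ring. Qed.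

Lemma hdet_eq0 (u v : Chat R) : (hdet u v == 0) = (u == v).
Proof.
by case: u => [a|]; case: v => [b|];
  rewrite /= ?subr_eq0 ?oppr_eq0 ?oner_eq0 ?eqxx.
Qed.

Lemma scale_pairE (a : C) (u : C * C) : a *: u = (a * u.1, a * u.2).
Proof. by case: u. Qed.

Lemma det2Zl a u v : det2 (a *: u) v = a * det2 u v.
Proof. by rewrite scale_pairE /det2 /=; ring. Qed.

Lemma det2Zr a u v : det2 u (a *: v) = a * det2 u v.
Proof. by rewrite scale_pairE /det2 /=; ring. Qed.

Lemma det2_conj u v : det2 (conj2 u) (conj2 v) = (det2 u v)^*.
Proof. by rewrite /det2 /= rmorphB !rmorphM. Qed.

(* Inversion in [K] is [v |-> refl_mx K (conj2 v)]; [refl_mx K] has matrix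
   [[c, r^2 - c c^*], [1, -c^*]] for a circle, [[d, p d^* - p^* d], [0, d^*]]
   for a line, and determinant [refl_det K]. *)
Definition refl_mx (K : gcircle R) (v : C * C) : C * C :=
  match K with
  | GCircle c r => (c * v.1 - (c * c^* - (real_complex R r) ^+ 2) * v.2,
                    v.1 - c^* * v.2)
  | GLine p d => (d * v.1 + (p * d^* - p^* * d) * v.2, d^* * v.2)
  end.

Definition refl_det (K : gcircle R) : C :=
  match K with
  | GCircle _ r => - (real_complex R r) ^+ 2
  | GLine _ d => d * d^*
  end.

Lemma det2_refl_mx K u v :
  det2 (refl_mx K u) (refl_mx K v) = refl_det K * det2 u v.
Proof. by case: K => [c r|p d]; rewrite /det2 /=; ring. Qed.

Lemma real_complex_neq0 (r : R) : 0 < r -> real_complex R r != 0.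
Proof. by move=> r_gt0; rewrite (inj_eq (@complexI R)) lt0r_neq0. Qed.

Lemma refl_det_neq0 K : gcircle_wf K -> refl_det K != 0.
Proof.
case: K => [c r|p d] /= wfK; last by rewrite mulf_neq0 // conjC_eq0.
by rewrite oppr_eq0 expf_neq0 // real_complex_neq0.
Qed.

Lemma reflect_gc_hom K u : gcircle_wf K ->
  exists mu : C, hom (reflect_gc K u) = mu *: refl_mx K (conj2 (hom u)).
Proof.
case: K => [c r|p d] /= wfK; case: u => [z|] /=.
- have r_neq0 := real_complex_neq0 wfK.
  have [->|z_neq_c] /= := eqVneq z c.
    exists (real_complex R r ^+ 2)^-1; rewrite scale_pairE /=.
    by congr pair; field; exact: r_neq0.
  have zc_neq0 : z^* - c^* != 0 by rewrite -rmorphB conjC_eq0 subr_eq0.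
  exists (z^* - c^*)^-1.
  by rewrite rmorphXn rmorphB rmorph1 /= scale_pairE /=; congr pair; field.
- by exists 1; rewrite !rmorph1 !rmorph0 scale_pairE /=; congr pair; ring.
- have d_neq0 : d^* != 0 by rewrite conjC_eq0.
  by exists (d^*)^-1; rewrite rmorph1 rmorphB scale_pairE /=; congr pair; field.
- by exists d^-1; rewrite rmorph1 rmorph0 scale_pairE /=; congr pair; field.
Qed.

Lemma on_gcircle_hom K x : gcircle_wf K -> on_gcircle K x ->
  exists l : C, refl_mx K (conj2 (hom x)) = l *: hom x.
Proof.
case: K => [c r|p d] /= wfK; case: x => [z|] //= onK.
- have normK : (z - c) * (z^* - c^*) = real_complex R r ^+ 2.
    by rewrite -rmorphB -normCK onK.
  exists (z^* - c^*); rewrite rmorph1 scale_pairE /=; congr pair; last by ring.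
  by rewrite -normK; ring.
- have d_neq0 : d^* != 0 by rewrite conjC_eq0.
  have onK' : (z^* - p^*) / d^* = (z - p) / d.
    by rewrite -rmorphB -fmorph_div; apply/eqP; rewrite -CrealE.
  have -> : z^* = p^* + d^* * ((z - p) / d) by rewrite -onK'; field.
  exists d^*; rewrite rmorph1 scale_pairE /=; congr pair; field.
  by rewrite -conjC_eq0.
- by exists d; rewrite rmorph1 rmorph0 scale_pairE /=; congr pair; ring.
Qed.

Lemma hdet_reflect_gc K P a : gcircle_wf K -> on_gcircle K a ->
  exists k : C, forall x, on_gcircle K x ->
    hdet (reflect_gc K P) x * (hdet x a)^* = k * (hdet P x)^* * hdet x a.
Proof.
move=> wfK onKa; have [mu muE] := reflect_gc_hom P wfK.
have [la laE] := on_gcircle_hom wfK onKa.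
exists (mu * la) => x onKx; have [lx lxE] := on_gcircle_hom wfK onKx.
rewrite !hdetE muE det2Zl.
set q := refl_mx K _; set X := hom x; set A := hom a; set D := refl_det K.
have qX : det2 q X * lx = D * (det2 (hom P) X)^*.
  by rewrite -det2_conj -det2_refl_mx lxE det2Zr mulrC.
have XA : lx * la * det2 X A = D * (det2 X A)^*.
  by rewrite -det2_conj -det2_refl_mx lxE laE det2Zl det2Zr mulrA.
apply: (mulIf (refl_det_neq0 wfK)); rewrite -/D.
transitivity (mu * det2 q X * (D * (det2 X A)^*)); first by ring.
transitivity (mu * la * (det2 q X * lx) * det2 X A); first by rewrite -XA; ring.
by rewrite qX; ring.
Qed.

End HomogeneousCoordinates.

Lemma MR_minus1_three_reflections (R : realType) (K1 K3 K5 : gcircle R)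
    (P a x2 x4 x6 : Chat R) :
  gcircle_wf K1 -> gcircle_wf K3 -> gcircle_wf K5 ->
  on_gcircle K1 a -> on_gcircle K3 a -> on_gcircle K5 a ->
  on_gcircle K1 x2 -> on_gcircle K3 x2 -> on_gcircle K3 x4 -> on_gcircle K5 x4 ->
  on_gcircle K5 x6 -> on_gcircle K1 x6 ->
  x2 != a -> x4 != a -> x6 != a ->
  MR_minus1 (fun k => nth None [:: reflect_gc K1 P; x2; reflect_gc K3 P; x4;
                                  reflect_gc K5 P; x6] k.-1).
Proof.
move=> wf1 wf3 wf5 o1a o3a o5a o12 o32 o34 o54 o56 o16 x2a x4a x6a.
have [k1 E1] := hdet_reflect_gc P wf1 o1a.
have [k3 E3] := hdet_reflect_gc P wf3 o3a.
have [k5 E5] := hdet_reflect_gc P wf5 o5a.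
have s_neq0 x : x != a -> (hdet x a)^* != 0 by rewrite conjC_eq0 hdet_eq0.
rewrite /MR_minus1 /= [hdet x2 _]hdetC [hdet x4 _]hdetC [hdet x6 _]hdetC.
apply: (mulIf (mulf_neq0 (mulf_neq0 (s_neq0 _ x2a) (s_neq0 _ x4a)) (s_neq0 _ x6a))).
rewrite mul0r; set q1 := reflect_gc K1 P; set q3 := reflect_gc K3 P.
set q5 := reflect_gc K5 P; set s := fun x => (hdet x a)^*.
transitivity (hdet q1 x2 * s x2 * (hdet q3 x4 * s x4) * (hdet q5 x6 * s x6)
  - hdet q3 x2 * s x2 * (hdet q5 x4 * s x4) * (hdet q1 x6 * s x6)); first by ring.
by rewrite /s (E1 x2) // (E1 x6) // (E3 x2) // (E3 x4) // (E5 x4) // (E5 x6) //; ring.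
Qed.

(* [vtx z k] is [hexv z k] for [1 <= k <= 6], continued 6-periodically
   ([eps_off] is junk beyond 6). *)
Definition vtx (z : pt) (k : nat) : pt := hexv z (k %% 6).

Lemma vtx_period z k : vtx z (6 + k) = vtx z k.
Proof. by rewrite /vtx modnDl. Qed.

Ltac case_mod6 k :=
  rewrite -?(modnDmr _ k 6); have := ltn_pmod k (isT : (0 < 6)%N);
  case: (k %% 6)%N => [|[|[|[|[|[|?]]]]]] // _.

Lemma vtx_opp z k : vtx (vtx z k) (3 + k) = z.
Proof.
rewrite /vtx; case_mod6 k.
all: by case: z => a b; rewrite /hexv /padd /=; congr pair; lia.
Qed.

Lemma vtx_next z k : vtx (vtx z k) (2 + k) = vtx z k.+1.
Proof.
rewrite /vtx -[k.+1]/(1 + k)%N; case_mod6 k.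
all: by case: z => a b; rewrite /hexv /padd /=; congr pair; lia.
Qed.

Lemma vtx_prev z k : vtx (vtx z k) (4 + k) = vtx z (5 + k).
Proof.
rewrite /vtx; case_mod6 k.
all: by case: z => a b; rewrite /hexv /padd /=; congr pair; lia.
Qed.

Lemma cls_vtxSS z k : cls (vtx z k.+2) = cls (vtx z k).
Proof.
rewrite /vtx -[k.+2]/(2 + k)%N; case_mod6 k.
all: by case: z => a b; rewrite /cls /hexv /padd /=; lia.
Qed.

Lemma cls_vtxS z k : cls (vtx z k.+1) != cls (vtx z k).
Proof.
rewrite /vtx -[k.+1]/(1 + k)%N; case_mod6 k.
all: by case: z => a b; rewrite /cls /hexv /padd /=; lia.
Qed.

Lemma MR_minus1_rotate (R : realType) (p : nat -> Chat R) :
  p 7 = p 1 -> MR_minus1 (fun k => p k.+1) -> MR_minus1 p.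
Proof. by rewrite /MR_minus1 => -> /= rotE; rewrite -[RHS]rotE; ring. Qed.

Section Pattern.
Variables (R : realType) (w : pt -> Chat R) (Cc : pt -> gcircle R) (P : Chat R).
Hypothesis pattern : hex_circle_pattern_MR w Cc.

Lemma extend_w_center c : cls c = 0%Z -> extend_w w Cc P c = reflect_gc (Cc c) P.
Proof. by rewrite /extend_w => ->. Qed.

Lemma extend_w_vertex c : cls c != 0%Z -> extend_w w Cc P c = w c.
Proof. by rewrite /extend_w => /negPf ->. Qed.

Lemma pattern_wf c : cls c = 0%Z -> gcircle_wf (Cc c).
Proof. by case/pattern. Qed.

Lemma pattern_on c k : cls c = 0%Z -> on_gcircle (Cc c) (w (vtx c k)).
Proof.
move=> /pattern[_ onC _ _ _]; rewrite /vtx.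
have [->|k6_neq0] := eqVneq (k %% 6)%N 0%N; first exact: (onC 6).
by apply: onC; rewrite lt0n k6_neq0 ltnW // ltn_pmod.
Qed.

Lemma pattern_neq_succ c k : cls c = 0%Z -> w (vtx c k.+1) != w (vtx c k).
Proof.
move=> /pattern[_ _ neqC _ _]; rewrite /vtx -[k.+1]/(1 + k)%N; case_mod6 k.
all: apply/eqP.
- exact (neqC 1 6 isT isT isT).
- exact (nesym (neqC 1 2 isT isT isT)).
- exact (nesym (neqC 2 3 isT isT isT)).
- exact (nesym (neqC 3 4 isT isT isT)).
- exact (nesym (neqC 4 5 isT isT isT)).
- exact (nesym (neqC 5 6 isT isT isT)).
Qed.

Lemma pattern_around z i : cls (vtx z i) = 0%Z ->
  let K := Cc (vtx z i) in
  [/\ on_gcircle K (w z), on_gcircle K (w (vtx z i.+1)),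
      on_gcircle K (w (vtx z (5 + i))) & w (vtx z i.+1) != w z].
Proof.
move=> center; split.
- by have := pattern_on (3 + i) center; rewrite vtx_opp.
- by have := pattern_on (2 + i) center; rewrite vtx_next.
- by have := pattern_on (4 + i) center; rewrite vtx_prev.
- have := pattern_neq_succ (2 + i) center.
  by rewrite vtx_next -[(2 + i).+1]/(3 + i)%N vtx_opp eq_sym.
Qed.

Lemma pattern_hexagon_MR z j : cls (vtx z j.+1) = 0%Z ->
  MR_minus1 (fun k => extend_w w Cc P (vtx z (k + j))).
Proof.
move=> c1; have c3 : cls (vtx z (3 + j)) = 0%Z by rewrite cls_vtxSS.
have c5 : cls (vtx z (5 + j)) = 0%Z by rewrite cls_vtxSS.
have vertex k :
    cls (vtx z k) = 0%Z -> extend_w w Cc P (vtx z k.+1) = w (vtx z k.+1).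
  by move=> ck; apply: extend_w_vertex; rewrite -ck cls_vtxS.
have [o1a o12 o16 n2] := pattern_around c1.
have [o3a o34 o32 n4] := pattern_around c3.
have [o5a o56 o54 n6] := pattern_around c5.
rewrite -[(5 + (3 + j))%N]/(6 + (2 + j))%N vtx_period in o32.
rewrite -[(5 + (5 + j))%N]/(6 + (4 + j))%N vtx_period in o54.
rewrite /MR_minus1 /= (extend_w_center c1) (extend_w_center c3) (extend_w_center c5).
rewrite (vertex _ c1) (vertex _ c3) (vertex _ c5).
exact: (MR_minus1_three_reflections P (pattern_wf c1) (pattern_wf c3) (pattern_wf c5)
  o1a o3a o5a o12 o32 o34 o54 o56 o16 n2 n4 n6).
Qed.

End Pattern.

Theorem theorem5 (R : realType) (w : pt -> Chat R) (Cc : pt -> gcircle R)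
    (Pinf : Chat R) :
  hex_circle_pattern_MR w Cc ->
  forall z : pt, cls z != 0%Z ->
    MR_minus1 (fun k => extend_w w Cc Pinf (hexv z k)).
Proof.
move=> pattern z z_noncenter.
change (MR_minus1 (fun k => extend_w w Cc Pinf (vtx z k))).
have [c1|c2] : cls (vtx z 1) = 0%Z \/ cls (vtx z 2) = 0%Z.
  by move: z_noncenter; case: z => a b; rewrite /cls /vtx /hexv /padd /=; lia.
- exact: (pattern_hexagon_MR Pinf pattern (j := 0)).
- apply: MR_minus1_rotate => //.
  exact: (pattern_hexagon_MR Pinf pattern (j := 1)).
Qed.
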